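(* Let $u,v$ be rational numbers with $u^2-3v^2=1$. Then $$x_1=1,\quad x_2=2v,\quad y_1=4v^2+1,\quad y_2=2v(2v^2+1),\quad z_1=4uv^2,\quad z_2=8v^4+4v^2+1$$ satisfy $(x_1^4+x_2^4)(y_1^4+y_2^4)=z_1^4+z_2^4$. In fact, for arbitrary $u,v$, the difference $z_1^4+z_2^4-(x_1^4+x_2^4)(y_1^4+y_2^4)$ with these values equals, up to sign, $256v^8(u^2+3v^2+1)(u^2-3v^2-1)$. In particular, every integer solution $(u,v)$ of the Pell equation $u^2-3v^2=1$ yields an integer solution of this quartic equation, so the equation has infinitely many integer solutions with $x_1=1$. *)

From mathcomp Require Import all_boot all_order all_algebra.
Set Implicit Arguments. Unset Strict Implicit. Unset Printing Implicit Defensive.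
Import GRing.Theory Num.Theory.
Local Open Scope ring_scope.

Definition quartic_eq (R : comRingType) (x1 x2 y1 y2 z1 z2 : R) : Prop :=
  (x1 ^+ 4 + x2 ^+ 4) * (y1 ^+ 4 + y2 ^+ 4) = z1 ^+ 4 + z2 ^+ 4.

Definition px1 (R : comRingType) (u v : R) : R := 1.
Definition px2 (R : comRingType) (u v : R) : R := 2 * v.
Definition py1 (R : comRingType) (u v : R) : R := 4 * v ^+ 2 + 1.
Definition py2 (R : comRingType) (u v : R) : R := 2 * v * (2 * v ^+ 2 + 1).
Definition pz1 (R : comRingType) (u v : R) : R := 4 * u * v ^+ 2.
Definition pz2 (R : comRingType) (u v : R) : R := 8 * v ^+ 4 + 4 * v ^+ 2 + 1.

From mathcomp Require Import all_boot all_order all_algebra.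
From mathcomp Require Import ring zify.
Import GRing.Theory Num.Theory.
Local Open Scope ring_scope.

(* For infinitely many integer solutions we iterate the automorphism
   (u, v) |-> (2u + 3v, u + 2v) of the Pell form u^2 - 3v^2 (multiplication
   by the fundamental unit 2 + sqrt 3): starting from (1, 0) it produces
   Pell solutions with u >= 1 and v growing by at least one at each step,
   so x2 = 2v is unbounded. *)

Lemma quartic_defect (R : comRingType) (u v : R) :
  (pz1 u v ^+ 4 + pz2 u v ^+ 4)
    - (px1 u v ^+ 4 + px2 u v ^+ 4) * (py1 u v ^+ 4 + py2 u v ^+ 4)
  = 256 * v ^+ 8 * (u ^+ 2 + 3 * v ^+ 2 + 1) * (u ^+ 2 - 3 * v ^+ 2 - 1).
Proof. rewrite /px1 /px2 /py1 /py2 /pz1 /pz2; ring. Qed.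

Lemma conic_quartic_solution (R : comRingType) (u v : R) :
  u ^+ 2 - 3 * v ^+ 2 = 1 ->
  quartic_eq (px1 u v) (px2 u v) (py1 u v) (py2 u v) (pz1 u v) (pz2 u v).
Proof.
move=> on_conic; apply/eqP; rewrite eq_sym -subr_eq0.
by rewrite quartic_defect on_conic subrr mulr0.
Qed.

(* Multiplication by the unit 2 + sqrt 3, acting on pairs (u, v) ~ u + v sqrt 3. *)
Definition pell_step (p : int * int) : int * int :=
  (2 * p.1 + 3 * p.2, p.1 + 2 * p.2).

Lemma pell_step_norm (u v : int) :
  let p := pell_step (u, v) in p.1 ^+ 2 - 3 * p.2 ^+ 2 = u ^+ 2 - 3 * v ^+ 2.
Proof. rewrite /pell_step /=; ring. Qed.

Lemma pell_unbounded (n : nat) : exists u v : int,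
  u ^+ 2 - 3 * v ^+ 2 = 1 /\ 1 <= u /\ n%:Z <= v.
Proof.
elim: n => [|n [u [v [pell [u_pos v_ge]]]]]; first by exists 1, 0.
exists (pell_step (u, v)).1, (pell_step (u, v)).2.
split; first by rewrite pell_step_norm.
by rewrite /pell_step /=; split; lia.
Qed.

Theorem mainTheorem9 :
  (* (1) rational points of the conic u^2 - 3 v^2 = 1 give solutions *)
  (forall u v : rat, u ^+ 2 - 3 * v ^+ 2 = 1 ->
     quartic_eq (px1 u v) (px2 u v) (py1 u v) (py2 u v) (pz1 u v) (pz2 u v))
  /\
  (* (2) for arbitrary u, v the defect equals, up to sign, 256 v^8 (u^2+3v^2+1)(u^2-3v^2-1) *)
  (forall u v : rat,
     let D := (pz1 u v ^+ 4 + pz2 u v ^+ 4)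
              - (px1 u v ^+ 4 + px2 u v ^+ 4) * (py1 u v ^+ 4 + py2 u v ^+ 4) in
     let c := 256 * v ^+ 8 * (u ^+ 2 + 3 * v ^+ 2 + 1) * (u ^+ 2 - 3 * v ^+ 2 - 1) in
     D = c \/ D = - c)
  /\
  (* (3) integer Pell solutions give integer solutions *)
  (forall u v : int, u ^+ 2 - 3 * v ^+ 2 = 1 ->
     quartic_eq (px1 u v) (px2 u v) (py1 u v) (py2 u v) (pz1 u v) (pz2 u v))
  /\
  (* (4) hence infinitely many integer solutions with x1 = 1
         (arising this way, with arbitrarily large x2) *)
  (forall N : int, exists u v : int,
     u ^+ 2 - 3 * v ^+ 2 = 1 /\ N < px2 u v /\
     quartic_eq (px1 u v) (px2 u v) (py1 u v) (py2 u v) (pz1 u v) (pz2 u v)).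
Proof.
split; first exact: conic_quartic_solution.
split; first by move=> u v /=; left; apply: quartic_defect.
split; first exact: conic_quartic_solution.
move=> N; have [u [v [pell [_ v_large]]]] := pell_unbounded `|N|.+1.
exists u, v; split=> //; split; last exact: conic_quartic_solution.
by rewrite /px2; lia.
Qed.
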